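(* Let $p,k\ge 1$ be integers, let $a_1,\dots,a_k\in\mathbb{R}$, and let $\mathbf{f}:\mathbb{R}^p\to\mathbb{R}^p$ be a differentiable flux. Let $\mathbb{M}_1,\dots,\mathbb{M}_k:\mathbb{R}^p\to\mathbb{R}^p$ be differentiable maps (the Maxwellians) satisfying, for all $\mathbf{u}$, $$\sum_{i=1}^k \mathbb{M}_i(\mathbf{u})=\mathbf{u},\qquad \sum_{i=1}^k a_i\,\mathbb{M}_i(\mathbf{u})=\mathbf{f}(\mathbf{u}),$$ and define $\mathbf{m}_2(\mathbf{u})=\sum_{i=1}^k a_i^2\,\mathbb{M}_i(\mathbf{u})$. Fix $\mathbf{u}$ and suppose there exists a strictly convex entropy $\eta(\mathbf{u})$ with Hessian matrix $\mathbf{A}_0$ such that: 1. $\mathbf{A}_0\mathbf{f}'(\mathbf{u})$ is symmetric; 2. the Maxwellians are monotone: $\mathbf{A}_0\mathbb{M}_i'(\mathbf{u})$ is symmetric positive definite for all $i\in\{1,\dots,k\}$; 3. $\min_i |a_i| > \rho(\mathbf{f}'(\mathbf{u}))$, where $\rho$ denotes the spectral radius. Then the matrix $\mathbf{K}=\mathbf{A}_0\left[\mathbf{m}_2'(\mathbf{u})-(\mathbf{f}'(\mathbf{u}))^2\right]$ is symmetric positive semi-definite.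
   Context: This arises from a kinetic (BGK-type) model with unknowns $\mathbf{F}\in\mathbb{R}^{kp}$, diagonal velocity matrix $\Lambda=\mathrm{diag}(a_1\mathbf{I}_p,\dots,a_k\mathbf{I}_p)$, projector $\mathbb{P}=(\mathbf{I}_p\ \cdots\ \mathbf{I}_p)$ and Maxwellian $\mathbb{M}=(\mathbb{M}_1,\dots,\mathbb{M}_k)$ satisfying $\mathbb{P}\mathbb{M}(\mathbf{u})=\mathbf{u}$ and $\mathbb{P}\Lambda\mathbb{M}(\mathbf{u})=\mathbf{f}(\mathbf{u})$; then $\mathbf{m}_2=\mathbb{P}\Lambda^2\mathbb{M}$ is the second moment of the Maxwellian. Primes denote Jacobian matrices with respect to $\mathbf{u}$; $\mathbf{A}_0$ is symmetric positive definite since $\eta$ is strictly convex. *)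

From mathcomp Require Import all_boot all_order all_algebra.
From mathcomp Require Import all_classical all_reals all_analysis.
From mathcomp Require Import complex.
Set Implicit Arguments. Unset Strict Implicit. Unset Printing Implicit Defensive.
Import Order.TTheory GRing.Theory Num.Theory.
Local Open Scope ring_scope.

(* The library's [jacobian f u] acts on row vectors: 'D_v f u = v *m jacobian f u,
   i.e. it is the TRANSPOSE of the usual Jacobian matrix f'(u)
   (whose (i,j) entry is d f_i / d u_j).  [jac f u] is the usual Jacobian. *)
Definition jac (R : realType) (p q : nat) (f : 'rV[R]_p -> 'rV[R]_q) (u : 'rV[R]_p)
  : 'M[R]_(q, p) := (jacobian f u)^T.

Definition grad (R : realType) (p : nat) (eta : 'rV[R]_p -> R) (u : 'rV[R]_p) : 'rV[R]_p :=
  \row_j ('D_(delta_mx 0 j) eta u).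
Definition hessian (R : realType) (p : nat) (eta : 'rV[R]_p -> R) (u : 'rV[R]_p) : 'M[R]_p :=
  jac (grad eta) u.

Definition strictly_convex (R : realType) (p : nat) (eta : 'rV[R]_p -> R) : Prop :=
  forall (x y : 'rV[R]_p) (t : R), x != y -> 0 < t < 1 ->
    eta (t *: x + (1 - t) *: y) < t * eta x + (1 - t) * eta y.

Definition symmetric_mx (R : realType) (p : nat) (A : 'M[R]_p) : Prop := A^T = A.

Definition posdef (R : realType) (p : nat) (A : 'M[R]_p) : Prop :=
  A^T = A /\ forall v : 'cV[R]_p, v != 0 -> 0 < (v^T *m A *m v) 0 0.

Definition possemidef (R : realType) (p : nat) (A : 'M[R]_p) : Prop :=
  A^T = A /\ forall v : 'cV[R]_p, 0 <= (v^T *m A *m v) 0 0.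

Definition spectral_radius (R : realType) (p : nat) (A : 'M[R]_p) : R :=
  sup [set r : R | exists2 l : R[i],
         eigenvalue (map_mx (fun x : R => (x%:C)%C) A) l & `|l| = (r%:C)%C].

(* Differentiating the moment relations at u gives, with J = f'(u) and
   B_i = M_i'(u), sum_i B_i = 1 and J = sum_i a_i B_i.  Hence, as for a
   variance, A0 (sum_i a_i^2 B_i - J^2) = sum_i (J - a_i)^T (A0 B_i) (J - a_i),
   a sum of congruences of the positive definite matrices A0 B_i.  This
   identity holds for any matrix A0. *)
From mathcomp Require Import all_boot all_order all_algebra.
From mathcomp Require Import all_classical all_reals all_analysis.
From mathcomp Require Import complex.
Set Implicit Arguments. Unset Strict Implicit. Unset Printing Implicit Defensive.
Import Order.TTheory GRing.Theory Num.Theory.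
Local Open Scope ring_scope.

Lemma lin1_mx_sumZ (R : comPzRingType) m n (I : Type) (r : seq I) (c : I -> R)
    (F : I -> 'rV[R]_m -> 'rV[R]_n) :
  lin1_mx (\sum_(i <- r) c i *: F i) = \sum_(i <- r) c i *: lin1_mx (F i).
Proof.
apply/matrixP => i j; rewrite !mxE fct_sumE !summxE.
by apply: eq_bigr => l _; rewrite !mxE.
Qed.

Lemma lin1_mx_id (R : pzRingType) n : lin1_mx (@id 'rV[R]_n) = 1%:M.
Proof. by apply/matrixP => i j; rewrite !mxE eq_sym. Qed.

Section Jacobian.
Variables (R : realType) (m n : nat).

Lemma jacobian_sumZ (I : Type) (r : seq I) (c : I -> R)
    (F : I -> 'rV[R]_m -> 'rV[R]_n) x :
  (forall i, differentiable (F i) x) ->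
  'J (\sum_(i <- r) c i *: F i) x = \sum_(i <- r) c i *: 'J (F i) x.
Proof.
move=> dF; have dsum : is_diff x (\sum_(i <- r) c i *: F i)
                                 (\sum_(i <- r) c i *: ('d (F i) x : _ -> _)).
  elim/big_rec2: _ => [|i g dg _ dgx]; first exact: is_diff_cst.
  by apply: is_diffD; apply: is_diffZ; exact: differentiableP.
have dsumE : ('d (\sum_(i <- r) c i *: F i) x : _ -> _) =
             \sum_(i <- r) c i *: ('d (F i) x : _ -> _).
  exact (@diff_val _ _ _ _ _ _ _ dsum).
by rewrite /jacobian -lin1_mx_sumZ; congr lin1_mx; exact: dsumE.
Qed.

Lemma jac_sumZ (I : Type) (r : seq I) (c : I -> R)
    (F : I -> 'rV[R]_m -> 'rV[R]_n) x :
  (forall i, differentiable (F i) x) ->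
  jac (fun v => \sum_(i <- r) c i *: F i v) x = \sum_(i <- r) c i *: jac (F i) x.
Proof.
move=> dF; rewrite /jac -fct_sumE jacobian_sumZ // linear_sum.
by apply: eq_bigr => i _; rewrite linearZ.
Qed.

Lemma jacobian_id x : 'J (@id 'rV[R]_n) x = 1%:M.
Proof.
have idE : ('d id x : _ -> _) = id := @diff_val _ _ _ _ _ _ _ (is_diff_id x).
by rewrite /jacobian -lin1_mx_id; congr lin1_mx; exact: idE.
Qed.

Lemma jac_id x : jac (@id 'rV[R]_n) x = 1%:M.
Proof. by rewrite /jac jacobian_id trmx1. Qed.

End Jacobian.

Lemma variance_congruence_sum (R : comPzRingType) p (I : Type) (r : seq I)
    (a : I -> R) (A J : 'M[R]_p) (B : I -> 'M[R]_p) :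
  \sum_(i <- r) B i = 1%:M -> J = \sum_(i <- r) a i *: B i ->
  A *m (\sum_(i <- r) a i ^+ 2 *: B i - J ^+ 2) =
  \sum_(i <- r) (J - (a i)%:M)^T *m (A *m B i) *m (J - (a i)%:M).
Proof.
move=> sumB eJ; pose S i := A *m B i.
have expand i : (J - (a i)%:M)^T *m S i *m (J - (a i)%:M) =
    J^T *m S i *m J - a i *: (J^T *m S i) - a i *: (S i *m J) + a i ^+ 2 *: S i.
  rewrite [(J - _)^T]linearB /= tr_scalar_mx !mulmxBl !mulmxBr mul_scalar_mx.
  by rewrite !mul_mx_scalar -scalemxAl scalerA -expr2 opprD opprK addrA.
have sumaS : \sum_(i <- r) a i *: S i = A *m J.
  by rewrite eJ mulmx_sumr; apply: eq_bigr => i _; rewrite scalemxAr.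
have sumJSJ : \sum_(i <- r) J^T *m S i *m J = J^T *m A *m J.
  by rewrite -mulmx_suml -mulmx_sumr -mulmx_sumr sumB mulmx1.
have sumJaS : \sum_(i <- r) a i *: (J^T *m S i) = J^T *m A *m J.
  by rewrite -mulmxA -sumaS mulmx_sumr; apply: eq_bigr => i _; rewrite scalemxAr.
have sumaSJ : \sum_(i <- r) a i *: (S i *m J) = A *m J ^+ 2.
  by rewrite expr2 -mulmxE mulmxA -sumaS mulmx_suml; apply: eq_bigr => i _; rewrite scalemxAl.
have sumaaS : \sum_(i <- r) a i ^+ 2 *: S i = A *m \sum_(i <- r) a i ^+ 2 *: B i.
  by rewrite mulmx_sumr; apply: eq_bigr => i _; rewrite scalemxAr.
rewrite (eq_bigr _ (fun i _ => expand i)) !big_split /= !sumrN.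
by rewrite sumJSJ sumJaS sumaSJ sumaaS subrr sub0r addrC mulmxBr.
Qed.

Section SemiDefinite.
Variables (R : realType) (p : nat).

Lemma posdef_possemidef (S : 'M[R]_p) : posdef S -> possemidef S.
Proof.
case=> symS posS; split=> // v; have [->|v0] := eqVneq v 0.
  by rewrite mulmx0 mxE.
exact/ltW/posS.
Qed.

Lemma possemidef_congr (S P : 'M[R]_p) :
  possemidef S -> possemidef (P^T *m S *m P).
Proof.
case=> symS psdS; split; first by rewrite !trmx_mul trmxK symS mulmxA.
by move=> v; rewrite -!mulmxA mulmxA -trmx_mul mulmxA; exact: psdS.
Qed.

Lemma possemidef_sum (I : Type) (r : seq I) (S : I -> 'M[R]_p) :
  (forall i, possemidef (S i)) -> possemidef (\sum_(i <- r) S i).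
Proof.
move=> psdS; split.
  by rewrite linear_sum; apply: eq_bigr => i _; case: (psdS i).
move=> v; rewrite mulmx_sumr mulmx_suml summxE.
by apply: sumr_ge0 => i _; case: (psdS i).
Qed.

End SemiDefinite.

Theorem proposition1 (R : realType) (p k : nat) (hp : (0 < p)%N) (hk : (0 < k)%N)
  (a : 'I_k -> R) (f : 'rV[R]_p -> 'rV[R]_p) (M : 'I_k -> 'rV[R]_p -> 'rV[R]_p)
  (hf : forall u, differentiable f u)
  (hM : forall i u, differentiable (M i) u)
  (hMsum : forall u, \sum_(i < k) M i u = u)
  (hMflux : forall u, \sum_(i < k) a i *: M i u = f u)
  (u : 'rV[R]_p) (eta : 'rV[R]_p -> R) (A0 : 'M[R]_p)
  (heta : strictly_convex eta) (hA0 : A0 = hessian eta u) (hA0pd : posdef A0)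
  (h1 : symmetric_mx (A0 *m jac f u))
  (h2 : forall i, posdef (A0 *m jac (M i) u))
  (h3 : forall i, spectral_radius (jac f u) < `|a i|) :
  let m2 := fun v => \sum_(i < k) (a i ^+ 2) *: M i v in
  possemidef (A0 *m (jac m2 u - jac f u ^+ 2)).
Proof.
move=> m2; have dM := fun i => hM i u.
have sumB : \sum_i jac (M i) u = 1%:M.
  have idE : id = fun v => \sum_i 1 *: M i v.
    by apply/funext => v; under eq_bigr do rewrite scale1r; rewrite hMsum.
  rewrite -(jac_id u) idE jac_sumZ //.
  by under [RHS]eq_bigr do rewrite scale1r.
have eJ : jac f u = \sum_i a i *: jac (M i) u.
  have fE : f = fun v => \sum_i a i *: M i v by apply/funext => v; rewrite hMflux.
  by rewrite [in LHS]fE jac_sumZ.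
rewrite /m2 jac_sumZ // (variance_congruence_sum A0 sumB eJ).
apply: possemidef_sum => i; apply: possemidef_congr.
exact: posdef_possemidef.
Qed.
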